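(* For every $\theta>1/3$ there is a constant $C(\theta)<\infty$ such that for every cubic polynomial $p(x)=x^3+ex^2+fx+g$ with $e,f,g\in\mathbb R$, $$\sum_{m\in\mathbb Z}\frac{1}{\langle p(m)\rangle^{\theta}}\le C(\theta).$$
   Context: $\langle x\rangle:=1+|x|$. *)

From HB Require Import structures.
From mathcomp Require Import all_boot all_order all_algebra.
From mathcomp Require Import all_classical all_reals all_analysis.
Set Implicit Arguments. Unset Strict Implicit. Unset Printing Implicit Defensive.
Import Order.TTheory GRing.Theory Num.Theory.
Local Open Scope ring_scope.

(* Japanese bracket <x> := 1 + |x| *)
Definition jbr (R : realType) (x : R) : R := 1 + `|x|.

Definition cubic (R : realType) (e f g x : R) : R := x ^+ 3 + e * x ^+ 2 + f * x + g.

(* The leading coefficient of a monic cubic p is its third divided difference at any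
   four points.  If four integers where |p| <= T are spaced at least k apart, every
   denominator of that divided difference is at least 2 k^3, whence k^3 <= 2 T.  So
   among n distinct integers the largest value of |p| is at least of order n^3, and
   ordering the terms of the sum by decreasing size, the n-th term is at most
   (n^3 / 216)^(-theta).  These bounds form a convergent p-series since 3 theta > 1. *)

From mathcomp Require Import all_boot all_order all_algebra.
From mathcomp Require Import all_classical all_reals all_analysis.
From mathcomp Require Import lra ring zify.
Import Order.TTheory GRing.Theory Num.Theory.
Local Open Scope ring_scope.

Section cubic_interpolation.
Context {R : realType}.

(* Lagrange interpolation of the leading coefficient, with the signs chosen so that
   all denominators are positive. *)
Lemma cubic_lagrange (e f g : R) {x0 x1 x2 x3 : R} : x0 < x1 -> x1 < x2 -> x2 < x3 ->
  - (cubic e f g x0 / ((x1 - x0) * (x2 - x0) * (x3 - x0)))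
  + cubic e f g x1 / ((x1 - x0) * (x2 - x1) * (x3 - x1))
  - cubic e f g x2 / ((x2 - x1) * (x3 - x2) * (x2 - x0))
  + cubic e f g x3 / ((x3 - x2) * (x3 - x1) * (x3 - x0)) = 1.
Proof.
move=> x01 x12 x23; rewrite /cubic; field.
by rewrite !subr_eq0 !gt_eqF //; lra.
Qed.

Lemma two_cube_le_prod (d u v w : R) : 0 <= d -> d <= u -> d <= v -> 2 * d <= w ->
  2 * d ^+ 3 <= u * v * w.
Proof.
move=> d0 du dv dw; rewrite (_ : 2 * d ^+ 3 = d * d * (2 * d)); last by ring.
by apply: ler_pM; [exact: mulr_ge0 | lra | exact: ler_pM | lra].
Qed.

Lemma ler_norm_div (p D m T : R) : 0 < m -> m <= D -> `|p| <= T -> `|p / D| <= T / m.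
Proof.
move=> m0 mD pT; have D0 : 0 < D by apply: lt_le_trans mD.
rewrite normrM normfV (gtr0_norm D0); apply: ler_pM => //.
- by rewrite invr_ge0 ltW.
- by rewrite lef_pV2 ?posrE.
Qed.

Lemma one_le_four_bound {v0 v1 v2 v3 : R} (B : R) : - v0 + v1 - v2 + v3 = 1 ->
  `|v0| <= B -> `|v1| <= B -> `|v2| <= B -> `|v3| <= B -> 1 <= 4 * B.
Proof.
move=> sum1 b0 b1 b2 b3.
have : 1 <= `|- v0 + v1 - v2 + v3| by rewrite sum1 normr1.
have := ler_normD (- v0 + v1 - v2) v3; have := ler_normB (- v0 + v1) v2.
by have := ler_normD (- v0) v1; rewrite normrN; lra.
Qed.

Lemma cubic_four_points_bound (e f g x0 x1 x2 x3 d T : R) : 0 < d ->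
  d <= x1 - x0 -> d <= x2 - x1 -> d <= x3 - x2 ->
  `|cubic e f g x0| <= T -> `|cubic e f g x1| <= T ->
  `|cubic e f g x2| <= T -> `|cubic e f g x3| <= T ->
  d ^+ 3 <= 2 * T.
Proof.
move=> d_gt0 d01 d12 d23 p0 p1 p2 p3.
have m0 : 0 < 2 * d ^+ 3 by rewrite mulr_gt0 // exprn_gt0.
have : 1 <= 4 * (T / (2 * d ^+ 3)).
  have [x01 x12 x23] : [/\ x0 < x1, x1 < x2 & x2 < x3] by split; lra.
  apply: (one_le_four_bound _ (cubic_lagrange e f g x01 x12 x23)).
  - by apply: ler_norm_div p0 => //; apply: two_cube_le_prod; lra.
  - by apply: ler_norm_div p1 => //; apply: two_cube_le_prod; lra.
  - by apply: ler_norm_div p2 => //; apply: two_cube_le_prod; lra.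
  - by apply: ler_norm_div p3 => //; apply: two_cube_le_prod; lra.
by rewrite mulrA ler_pdivlMr // mul1r; lra.
Qed.

End cubic_interpolation.

Lemma sorted_ltn_nth_addn (s : seq int) (i k : nat) : sorted <%R s ->
  (i + k < size s)%N -> nth 0 s i + k%:Z <= nth 0 s (i + k).
Proof.
move=> ss; elim: k => [|k IH] hik; first by rewrite addn0 addr0.
have /IH : (i + k < size s)%N by lia.
have : nth 0 s (i + k) < nth 0 s (i + k.+1).
  by apply: (sorted_ltn_nth lt_trans) => //; rewrite ?inE /=; lia.
move: (nth 0 s (i + k)) (nth 0 s (i + k.+1)) => u v; lia.
Qed.

Section cubic_sublevel_sets.
Context {R : realType}.
Variables (e f g T : R).

Lemma cubic_sublevel_gap_bound {S : seq int} {k : nat} : uniq S ->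
  {in S, forall m, `|cubic e f g m%:~R| <= T} -> (0 < k)%N -> (3 * k < size S)%N ->
  (k%:R : R) ^+ 3 <= 2 * T.
Proof.
move=> uS hS k0 kS.
set s := sort <=%O S.
have ss : sorted <%R s by rewrite sort_lt_sorted.
have zs : size s = size S by rewrite size_sort.
have ms m : m \in s -> `|cubic e f g m%:~R| <= T by rewrite mem_sort; apply: hS.
pose x0 := nth 0 s 0; pose x1 := nth 0 s k.
pose x2 := nth 0 s (k + k); pose x3 := nth 0 s (k + k + k).
have [g1 g2 g3] : [/\ x0 + k%:Z <= x1, x1 + k%:Z <= x2 & x2 + k%:Z <= x3].
  by split; apply: sorted_ltn_nth_addn => //; rewrite zs; lia.
have nth_in i : (i <= 3 * k)%N -> nth 0 s i \in s.
  by move=> ?; apply: mem_nth; rewrite zs; lia.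
have gap (u v : int) : u + k%:Z <= v -> (k%:R : R) <= v%:~R - u%:~R.
  by move=> h; rewrite -intrB -[k%:R]/((k%:Z)%:~R) ler_int; lia.
apply: (cubic_four_points_bound e f g x0%:~R x1%:~R x2%:~R x3%:~R).
- by rewrite ltr0n.
- exact: gap g1.
- exact: gap g2.
- exact: gap g3.
all: by apply: ms; apply: nth_in; lia.
Qed.

(* With [k = (n - 1) / 3]: [n <= 3 (k + 1)], [(k + 1)^3 <= 4 (1 + k^3)] and
   [k^3 <= 2 T], whence [216 = 27 * 4 * 2]. *)
Lemma cubic_sublevel_size (S : seq int) : 0 <= T -> uniq S ->
  {in S, forall m, `|cubic e f g m%:~R| <= T} -> (size S)%:R ^+ 3 <= 216 * (1 + T) :> R.
Proof.
move=> T0 uS hS; case: (posnP (size S)) => [-> | S0].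
  by rewrite expr0n /= mulr_ge0 //; lra.
set k := ((size S).-1 %/ 3)%N.
have k3 : (k%:R : R) ^+ 3 <= 2 * T.
  case: (posnP k) => [-> | k0]; first by rewrite expr0n /= mulr_ge0.
  by apply: (cubic_sublevel_gap_bound uS hS k0); lia.
have : (size S <= 3 * (k + 1))%N by lia.
rewrite -(ler_nat R) natrM natrD; set N := (size S)%:R; set K := k%:R => NK.
have K0 : 0 <= K by rewrite ler0n.
have N3 : N ^+ 3 <= (3 * (K + 1)) ^+ 3 by rewrite lerXn2r ?nnegrE //; lra.
have : 0 <= (K - 1) ^+ 2 * (K + 1) by rewrite mulr_ge0 ?sqr_ge0 //; lra.
nra.
Qed.

End cubic_sublevel_sets.

Lemma seq_arg_max {R : realType} {T : eqType} (F : T -> R) {S : seq T} : S != [::] ->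
  exists2 x, x \in S & {in S, forall y, F y <= F x}.
Proof.
elim: S => [//|x [|z S] IH] _.
  by exists x; rewrite ?mem_seq1 // => y; rewrite mem_seq1 => /eqP ->.
have [u uS hu] := IH isT.
case: (leP (F x) (F u)) => [xu | ux].
  exists u; first by rewrite inE uS orbT.
  by move=> y; rewrite inE => /predU1P [->|/hu].
exists x; first by rewrite inE eqxx.
by move=> y; rewrite inE => /predU1P [->//|/hu/le_trans]; apply; apply: ltW.
Qed.

Lemma powRN_le {R : realType} (theta u v : R) : 0 <= theta -> 0 < u -> u <= v ->
  v `^ (- theta) <= u `^ (- theta).
Proof.
move=> t0 u0 uv; have v0 : 0 < v by apply: lt_le_trans uv.
rewrite !powRN lef_pV2 ?posrE ?powR_gt0 //.
by apply: ge0_ler_powR => //; rewrite nnegrE ltW.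
Qed.

Lemma sum_jbr_cubic_le {R : realType} (e f g theta : R) (S : seq int) :
  0 <= theta -> uniq S ->
  \sum_(m <- S) jbr (cubic e f g m%:~R) `^ (- theta) <=
  \sum_(j < size S) ((j.+1%:R : R) ^+ 3 / 216) `^ (- theta).
Proof.
move=> t0; have [n sS] : {n | size S = n} by exists (size S).
rewrite sS; elim: n S sS => [|n IH] S sS uS.
  by move/size0nil: sS => ->; rewrite big_nil big_ord0.
have S0 : S != [::] by apply/eqP => S0; rewrite S0 in sS.
have [x xS hx] := seq_arg_max (fun m : int => `|cubic e f g m%:~R|) S0.
rewrite (perm_big _ (perm_to_rem xS)) big_cons big_ord_recr /= addrC.
apply: lerD; first by apply: IH; rewrite ?rem_uniq // size_rem // sS.
apply: powRN_le => //; rewrite ler_pdivrMr // mulrC -sS /jbr.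
exact: cubic_sublevel_size (normr_ge0 _) uS hx.
Qed.

Section p_series.
Context {R : realType}.

Lemma sum_geometric_le {q : R} (K : nat) : 0 < q -> q < 1 ->
  \sum_(k < K) q ^+ k <= (1 - q)^-1.
Proof.
move=> q0 q1; rewrite -[X in _ <= X]mul1r.
have -> : \sum_(k < K) q ^+ k = series (geometric 1 q) K.
  by rewrite /series /= big_mkord; apply: eq_bigr => k _; rewrite /geometric /= mul1r.
by apply: geometric_le_lim; rewrite ?gtr0_norm.
Qed.

Lemma powR2_lt1 {s : R} : 1 < s -> 2 `^ (1 - s) < 1.
Proof.
move=> s1; rewrite lt_neqAle powR_eq1 !negb_or -leNgt.
apply/andP; split; first by apply/and3P; split; [apply/eqP | | apply/eqP]; lra.
by rewrite -[leRHS](powRr0 2) ler_powR //; lra.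
Qed.

Lemma sum_powRN_dyadic_block {s : R} (K : nat) : 0 <= s ->
  \sum_(2 ^ K <= m < 2 ^ K.+1) (m%:R : R) `^ (- s) <= (2 `^ (1 - s)) ^+ K.
Proof.
move=> s0; have P0 : (0 : R) < (2 ^ K)%:R by rewrite ltr0n expn_gt0.
apply: (@le_trans _ _ (\sum_(2 ^ K <= m < 2 ^ K.+1) ((2 ^ K)%:R : R) `^ (- s))).
  rewrite big_nat [leRHS]big_nat; apply: ler_sum => m /andP [h1 _].
  by apply: powRN_le => //; rewrite ler_nat.
rewrite sumr_const_nat (_ : (2 ^ K.+1 - 2 ^ K = 2 ^ K)%N); last first.
  by rewrite expnS mul2n -addnn addnK.
rewrite -(mulr_natr (((2 ^ K)%:R : R) `^ (- s)) (2 ^ K)) -[X in _ * X]powRr1 ?ler0n //.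
rewrite -powRD; last by apply/implyP => _; rewrite gt_eqF.
by rewrite natrX -powR_mulrn // powRAC powR_mulrn // addrC.
Qed.

Lemma sum_powRN_dyadic {s : R} (K : nat) : 0 <= s ->
  \sum_(1 <= m < 2 ^ K) (m%:R : R) `^ (- s) <= \sum_(k < K) (2 `^ (1 - s)) ^+ k.
Proof.
move=> s0; elim: K => [|K IH]; first by rewrite big_geq // big_ord0.
rewrite (big_cat_nat _ (n := 2 ^ K)) ?leq_exp2l ?expn_gt0 //= big_ord_recr /=.
by apply: lerD => //; apply: sum_powRN_dyadic_block.
Qed.

Lemma sum_powRN_nat_le (s : R) (n : nat) : 1 < s ->
  \sum_(j < n) (j.+1%:R : R) `^ (- s) <= (1 - 2 `^ (1 - s))^-1.
Proof.
move=> s1; have s0 : 0 <= s by lra.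
have q0 : (0 : R) < 2 `^ (1 - s) by rewrite powR_gt0.
apply: (le_trans _ (le_trans (sum_powRN_dyadic n s0)
                             (sum_geometric_le n q0 (powR2_lt1 s1)))).
have -> : \sum_(j < n) (j.+1%:R : R) `^ (- s) = \sum_(1 <= m < n.+1) (m%:R : R) `^ (- s).
  by rewrite big_add1 /= big_mkord.
rewrite (big_cat_nat _ (n := n.+1) (m := 1) (p := 2 ^ n)) //=; last exact: ltn_expl.
by rewrite lerDl sumr_ge0 // => i _; apply: powR_ge0.
Qed.

End p_series.

Lemma sum_jbr_cubic_uniform_bound {R : realType} {theta : R} : 3^-1 < theta ->
  exists C : R, forall (e f g : R) (S : seq int), uniq S ->
    \sum_(m <- S) jbr (cubic e f g m%:~R) `^ (- theta) <= C.
Proof.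
move=> htheta; have t0 : 0 <= theta by apply: le_trans (ltW htheta); rewrite invr_ge0.
have s1 : 1 < 3 * theta by rewrite -(ltr_pM2l (_ : (0 : R) < 3)) // mulfV in htheta.
set c := (216^-1 : R) `^ (- theta).
exists (c * (1 - 2 `^ (1 - 3 * theta))^-1) => e f g S uS.
apply: le_trans (sum_jbr_cubic_le e f g theta S t0 uS) _.
have -> : \sum_(j < size S) ((j.+1%:R : R) ^+ 3 / 216) `^ (- theta) =
    c * \sum_(j < size S) (j.+1%:R : R) `^ (- (3 * theta)).
  rewrite mulr_sumr; apply: eq_bigr => j _.
  rewrite powRM ?invr_ge0 ?exprn_ge0 ?ler0n // mulrC /c; congr (_ * _).
  by rewrite -powR_mulrn ?ler0n // -powRrM mulrN.
by rewrite ler_wpM2l ?powR_ge0 // sum_powRN_nat_le.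
Qed.

Local Open Scope classical_set_scope.

Theorem lemma3p2 (R : realType) (theta : R) (htheta : 3^-1 < theta) :
  exists C : R, forall e f g : R,
    (\esum_(m in [set: int]) ((jbr (cubic e f g m%:~R)) `^ (- theta))%:E <= C%:E)%E.
Proof.
have [C HC] := sum_jbr_cubic_uniform_bound htheta.
exists C => e f g; apply: ge_ereal_sup => _ [A [finA _] <-].
by rewrite fsbig_finite // sumEFin lee_fin HC // finmap.fset_uniq.
Qed.
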